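(* Let $p$ be a prime and $V$ a vector space of dimension $d$ over $\mathbb{F}_p$. Let $G_0\le \mathrm{GL}(V)$ be a solvable group acting irreducibly and quasi-primitively on $V$, with structure data $W$, $e$ as described in the context. Let $\mathrm{rad}(e)$ denote the product of the distinct prime divisors of $e$. Then $\mathrm{rad}(e)$ divides $|W|-1$.
   Context: $G_0$ is quasi-primitive on $V$: every normal subgroup of $G_0$ acts homogeneously on $V$. Structure data: subgroups $Z(E)\le U\le F\le A\le G_0$, each normal in $G_0$, and a characteristic subgroup $E$ of $F$, such that: (i) $F=EU$ is a central product with $E\cap U=Z(E)$; (ii) $F/U\cong E/Z(E)$ and $E/Z(E)$ is a direct sum of completely reducible $G_0/F$-modules; (iii) $E=E_1\times\cdots\times E_s$ with $E_i$ an extraspecial $q_i$-group of order $q_i^{2m_i+1}$, the $q_i$ distinct primes and $m_i\ge 1$; $e:=\prod_i q_i^{m_i}$, $e\mid d$, $\gcd(p,e)=1$; (iv) $A=C_{G_0}(U)$ and $A/F$ acts faithfully on $E/Z(E)$; (v) $U$ is cyclic and acts fixed-point-freely on $W$, an irreducible $\mathbb{F}_pU$-submodule of $V$; (vi) $|U|$ divides $p^k-1$ for some $k\ge1$ and $W$ is identified with the $\mathbb{F}_p$-span of $U$, isomorphic to $\mathbb{F}_{p^k}$, so $|W|=p^k$; (vii) $|V|=|W|^{eb}$ for some positive integer $b$. *)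

From HB Require Import structures.
From mathcomp Require Import all_boot all_order all_algebra all_fingroup all_solvable all_field all_character.
Set Implicit Arguments. Unset Strict Implicit. Unset Printing Implicit Defensive.
Local Open Scope group_scope.

Definition mx_homogeneous (F : fieldType) (gT : finGroupType) (G : {group gT})
    (n : nat) (rG : mx_representation F G n) : Prop :=
  inhabited (mxsemisimple rG 1%:M) /\
  (forall M1 M2 : 'M[F]_n, mxsimple rG M1 -> mxsimple rG M2 -> mx_iso rG M1 M2).

Definition mx_quasi_primitive (F : fieldType) (gT : finGroupType) (G : {group gT})
    (n : nat) (rG : mx_representation F G n) : Prop :=
  forall (N : {group gT}) (sNG : N \subset G), N <| G ->
    mx_homogeneous (subg_repr rG sNG).

(* E/Z(E) is completely reducible as a module under the conjugation action of G
   (G/F-module since F acts trivially): every G-invariant subgroup H with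
   Z(E) <= H <= E has a G-invariant complement modulo Z(E). *)
Definition section_completely_reducible (gT : finGroupType) (G E : {group gT}) : Prop :=
  forall H : {group gT}, 'Z(E) \subset H -> H \subset E -> G \subset 'N(H) ->
    exists2 K : {group gT},
      [/\ 'Z(E) \subset K, K \subset E & G \subset 'N(K)] &
      H :&: K = 'Z(E) /\ H * K = E.

Definition nat_rad (n : nat) : nat := \prod_(q <- primes n) q.

From HB Require Import structures.
From mathcomp Require Import all_boot all_order all_algebra all_fingroup all_solvable all_field all_character.
Set Implicit Arguments. Unset Strict Implicit. Unset Printing Implicit Defensive.

(* Every prime divisor of e is one of the q_i.  The centre of the
   extraspecial factor E_i has order q_i and lies in Z(E) <= U, so q_i
   divides |U|, which divides p^k - 1; as rad(e) is a product of distinct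
   primes, it divides p^k - 1 as well. *)

Lemma dvdn_prod_uniq_primes (l : seq nat) N :
  uniq l -> all prime l -> all (dvdn^~ N) l -> \prod_(r <- l) r %| N.
Proof.
elim: l => [|r l IHl] /=; first by rewrite big_nil dvd1n.
case/andP=> r_l uniq_l /andP[r_pr l_pr] /andP[r_N l_N].
rewrite big_cons Gauss_dvd ?r_N ?IHl // prime_coprime // Euclid_dvd_prod //.
rewrite big_has; apply/hasPn=> t t_l.
rewrite dvdn_prime2 ?(allP l_pr t t_l) //.
by apply: contraNneq r_l => ->.
Qed.

Lemma nat_rad_dvd n N :
  (forall r, prime r -> r %| n -> r %| N) -> nat_rad n %| N.
Proof.
move=> rN; apply: dvdn_prod_uniq_primes; first exact: primes_uniq.
  by apply/allP=> r; rewrite mem_primes => /andP[].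
by apply/allP=> r; rewrite mem_primes => /and3P[r_pr _ /(rN r r_pr)].
Qed.

Lemma prime_dvd_prod_prime_powers (I : finType) (q m : I -> nat) r :
  prime r -> (forall i, prime (q i)) ->
  r %| \prod_i q i ^ m i -> exists i, r = q i.
Proof.
move=> r_pr q_pr; rewrite Euclid_dvd_prod // big_has_cond => /hasP[i _ /=].
by rewrite Euclid_dvdX // dvdn_prime2 // => /andP[/eqP-> _]; exists i.
Qed.

Local Open Scope group_scope.

Lemma center_sub_bigdprod (gT : finGroupType) (I : finType) (P : pred I)
    (A : I -> {group gT}) (G : {group gT}) i :
  \big[dprod/1]_(j | P j) A j = G -> P i -> 'Z(A i) \subset 'Z(G).
Proof.
move=> defG Pi; rewrite -(bigdprodWY (center_bigdprod defG)).
by rewrite sub_gen //; apply: (bigcup_max i).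
Qed.

Theorem lemma2p6 (p d : nat) (gT : finGroupType) (G0 : {group gT})
    (rG : mx_representation 'F_p G0 d)
    (E U F A : {group gT}) (s : nat) (Ei : 'I_s -> {group gT}) (q m : 'I_s -> nat)
    (e : nat) (W : 'M['F_p]_d) (k b : nat)
    (nUG : U <| G0) :
  prime p ->
  (* G0 <= GL(V), solvable, irreducible, quasi-primitive *)
  mx_faithful rG -> solvable G0 -> mx_irreducible rG -> mx_quasi_primitive rG ->
  (* Z(E) <= U <= F <= A <= G0, each normal in G0; E characteristic in F *)
  'Z(E) \subset U -> U \subset F -> F \subset A ->
  'Z(E) <| G0 -> F <| G0 -> A <| G0 -> E \char F ->
  (* (i) F = EU central product, E :&: U = Z(E) *)
  E \* U = F -> E :&: U = 'Z(E) ->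
  (* (ii) *)
  F / U \isog E / 'Z(E) -> section_completely_reducible G0 E ->
  (* (iii) *)
  \big[dprod/1]_(i < s) Ei i = E ->
  (forall i, prime (q i)) -> injective q ->
  (forall i, extraspecial (Ei i)) -> (forall i, (q i).-group (Ei i)) ->
  (forall i, #|Ei i| = (q i ^ (2 * m i + 1))%N) -> (forall i, 1 <= m i)%N ->
  e = (\prod_(i < s) q i ^ m i)%N -> (e %| d)%N -> coprime p e ->
  (* (iv) *)
  A :=: 'C_G0(U) ->
  [set a in A | [forall x in E, [~ x, a] \in 'Z(E)]] = F ->
  (* (v) *)
  cyclic U -> mxsimple (subg_repr rG (normal_sub nUG)) W ->
  (forall u, u \in U -> u != 1 ->
     forall w : 'rV['F_p]_d, (w <= W)%MS -> (w *m rG u)%R = w -> w = 0%R) ->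
  (* (vi) |W| = p^k, |U| divides p^k - 1, W identified with F_p-span of U *)
  (1 <= k)%N -> \rank W = k -> (#|U| %| p ^ k - 1)%N ->
  \rank (enveloping_algebra_mx (subg_repr rG (normal_sub nUG))) = k ->
  (* (vii) |V| = |W|^(e b) *)
  (0 < b)%N -> d = (k * (e * b))%N ->
  (nat_rad e %| p ^ k - 1)%N.
Proof.
move=> _ _ _ _ _ ZE_U _ _ _ _ _ _ _ _ _ _ defE q_pr _ Ei_es Ei_q _ _ -> _ _.
move=> _ _ _ _ _ _ _ U_dvd _ _ _.
apply: nat_rad_dvd => r r_pr /(prime_dvd_prod_prime_powers r_pr q_pr)[i ->].
apply: dvdn_trans U_dvd.
rewrite -(card_center_extraspecial (Ei_q i) (Ei_es i)).
exact/cardSg/(subset_trans (center_sub_bigdprod defE isT)).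
Qed.
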